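(* Let $k\ge1$ be an integer, $a,b\in(\frac1{10},10)$, $t_1\ge0$ and $C>0$. There exists a uniformly $C^1$, uniformly elliptic real $2\times2$ matrix function $A$ on $\mathbb{T}^2\times\mathbb{R}$ with $$A=\begin{pmatrix}a&0\\0&a\end{pmatrix}\text{ for }t\le t_1,\qquad A=\begin{pmatrix}a&0\\0&b\end{pmatrix}\text{ for }t\ge t_1+C,$$ belonging to the regularity class $R(10,\frac{10\sqrt\pi}{C})$, such that $u=\cos(kx)e^{-k\sqrt a\,t}$ solves $\ddot u+\operatorname{div}(A\nabla u)=0$ in $\mathbb{T}^2\times\mathbb{R}$.
   Context: $\mathbb{T}^2=(\mathbb{R}/2\pi\mathbb{Z})^2$ with coordinates $(x,y)$; $t$ the third coordinate. $\ddot u+\operatorname{div}(A\nabla u)$ means $\partial_t^2u+\sum_{i,j\in\{x,y\}}\partial_i(A_{ij}\partial_ju)$. Regularity class $R(\Lambda,C)$: $\Lambda^{-1}|\xi|^2\le\xi^TA\xi\le\Lambda|\xi|^2$ for all $\xi\in\mathbb{R}^2$ at every point, and the entries of $A$ are $C^1$ with all first partial derivatives in $x,y,t$ bounded by $C$ in absolute value. *)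

From Stdlib Require Import Reals.
From Coquelicot Require Import Coquelicot.
Open Scope R_scope.

Inductive ix := ix_x | ix_y.

(* A matrix field on T^2 x R: entries as functions of (x, y, t) : R^3. *)
Definition matfield := ix -> ix -> R -> R -> R -> R.

Definition pdx (f : R -> R -> R -> R) (x y t : R) : R := Derive (fun s => f s y t) x.
Definition pdy (f : R -> R -> R -> R) (x y t : R) : R := Derive (fun s => f x s t) y.
Definition pdt (f : R -> R -> R -> R) (x y t : R) : R := Derive (fun s => f x y s) t.

Definition cont3 (g : R -> R -> R -> R) : Prop :=
  forall x y t eps, 0 < eps -> exists delta, 0 < delta /\
    forall x' y' t', Rabs (x' - x) < delta -> Rabs (y' - y) < delta ->
      Rabs (t' - t) < delta -> Rabs (g x' y' t' - g x y t) < eps.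

Definition C1_3 (g : R -> R -> R -> R) : Prop :=
  (forall x y t, ex_derive (fun s => g s y t) x /\ ex_derive (fun s => g x s t) y
                 /\ ex_derive (fun s => g x y s) t)
  /\ cont3 (pdx g) /\ cont3 (pdy g) /\ cont3 (pdt g).

(* A is a function on T^2 x R = (R/2piZ)^2 x R: 2pi-periodic in x and y. *)
Definition torus_periodic (A : matfield) : Prop :=
  forall i j x y t, A i j (x + 2 * PI) y t = A i j x y t /\
                    A i j x (y + 2 * PI) t = A i j x y t.

Definition qform (A : matfield) (x y t xi1 xi2 : R) : R :=
  xi1 * xi1 * A ix_x ix_x x y t + xi1 * xi2 * A ix_x ix_y x y t
  + xi2 * xi1 * A ix_y ix_x x y t + xi2 * xi2 * A ix_y ix_y x y t.

Definition reg_class (Lam Cb : R) (A : matfield) : Prop :=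
  (forall x y t xi1 xi2,
      / Lam * (xi1 ^ 2 + xi2 ^ 2) <= qform A x y t xi1 xi2 /\
      qform A x y t xi1 xi2 <= Lam * (xi1 ^ 2 + xi2 ^ 2))
  /\ (forall i j, C1_3 (A i j))
  /\ (forall i j x y t,
        Rabs (pdx (A i j) x y t) <= Cb /\ Rabs (pdy (A i j) x y t) <= Cb /\
        Rabs (pdt (A i j) x y t) <= Cb).

Definition diag2 (d1 d2 : R) (i j : ix) : R :=
  match i, j with
  | ix_x, ix_x => d1
  | ix_y, ix_y => d2
  | _, _ => 0
  end.

Definition flux (A : matfield) (u : R -> R -> R -> R) (i : ix) (x y t : R) : R :=
  A i ix_x x y t * pdx u x y t + A i ix_y x y t * pdy u x y t.

Definition solves_eq (A : matfield) (u : R -> R -> R -> R) : Prop :=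
  forall x y t,
    (forall x' y' t', ex_derive (fun s => u s y' t') x' /\
                      ex_derive (fun s => u x' s t') y' /\
                      ex_derive (fun s => u x' y' s) t') /\
    ex_derive (fun s => pdt u x y s) t /\
    ex_derive (fun s => flux A u ix_x s y t) x /\
    ex_derive (fun s => flux A u ix_y x s t) y /\
    Derive (fun s => pdt u x y s) t
    + Derive (fun s => flux A u ix_x s y t) x
    + Derive (fun s => flux A u ix_y x s t) y = 0.

(* Since u does not depend on y, only the first column of A enters the
   equation, and with A_xx = a, A_yx = 0 it reads
   u_tt + a u_xx = k^2 a u - a k^2 u = 0.  So A = diag(a, g(t)) works, where g
   passes from a to b on [t1, t1 + C] along the C^1 smoothstep 3s^2 - 2s^3 of
   (t - t1)/C; its slope is at most (3/2)|b - a|/C <= 15/C <= 10 sqrt(pi)/C,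
   and all its values lie between a and b, hence in (1/10, 10). *)

From Stdlib Require Import Reals Lra.
From Coquelicot Require Import Coquelicot.
Open Scope R_scope.

Definition lipschitz (f : R -> R) (L : R) : Prop :=
  forall s s', Rabs (f s - f s') <= L * Rabs (s - s').

Lemma lipschitz_continuous (f : R -> R) (L : R) (x : R) :
  lipschitz f L -> continuous f x.
Proof.
intros Hf. apply filterlim_locally. intros eps.
assert (HL : 0 < Rabs L + 1) by (pose proof (Rabs_pos L); lra).
assert (Hd : 0 < eps / (Rabs L + 1)) by (apply Rdiv_lt_0_compat; [apply cond_pos | lra]).
exists (mkposreal _ Hd). intros y Hy.
change (Rabs (y - x) < eps / (Rabs L + 1)) in Hy.
change (Rabs (f y - f x) < eps).
apply Rle_lt_trans with ((Rabs L + 1) * Rabs (y - x)).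
- specialize (Hf y x). pose proof (Rle_abs L). pose proof (Rabs_pos (y - x)). nra.
- apply Rmult_lt_compat_l with (r := Rabs L + 1) in Hy; [| lra].
  replace ((Rabs L + 1) * (eps / (Rabs L + 1))) with (pos eps) in Hy by (field; lra).
  exact Hy.
Qed.

Definition clamp01 (s : R) : R := Rmin (Rmax s 0) 1.

Ltac clamp_cases :=
  unfold clamp01, Rmin, Rmax, Rabs in *;
  repeat match goal with
         | |- context [Rle_dec ?a ?b] => destruct (Rle_dec a b)
         | _ : context [Rle_dec ?a ?b] |- _ => destruct (Rle_dec a b)
         | |- context [Rcase_abs ?a] => destruct (Rcase_abs a)
         end; lra.

Lemma clamp01_lipschitz : lipschitz clamp01 1.
Proof. intros s s'. rewrite Rmult_1_l. clamp_cases. Qed.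

Lemma clamp01_range s : 0 <= clamp01 s <= 1.
Proof. clamp_cases. Qed.

Lemma clamp01_le0 s : s <= 0 -> clamp01 s = 0.
Proof. intros. clamp_cases. Qed.

Lemma clamp01_ge1 s : 1 <= s -> clamp01 s = 1.
Proof. intros. clamp_cases. Qed.

Lemma clamp01_id s : 0 <= s <= 1 -> clamp01 s = s.
Proof. intros. clamp_cases. Qed.

Definition bump (s : R) : R := 6 * clamp01 s * (1 - clamp01 s).

Definition smoothstep (s : R) : R := RInt bump 0 s.

Lemma bump_lipschitz : lipschitz bump 6.
Proof.
intros s s'. unfold bump.
pose proof (clamp01_lipschitz s s'); pose proof (clamp01_range s); pose proof (clamp01_range s').
replace (6 * clamp01 s * (1 - clamp01 s) - 6 * clamp01 s' * (1 - clamp01 s'))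
  with (6 * (clamp01 s - clamp01 s') * (1 - clamp01 s - clamp01 s')) by ring.
rewrite !Rabs_mult, (Rabs_pos_eq 6) by lra.
assert (Rabs (1 - clamp01 s - clamp01 s') <= 1) by (apply Rabs_le; lra).
pose proof (Rabs_pos (clamp01 s - clamp01 s')).
pose proof (Rabs_pos (1 - clamp01 s - clamp01 s')).
nra.
Qed.

Lemma bump_continuous s : continuous bump s.
Proof. exact (lipschitz_continuous bump 6 s bump_lipschitz). Qed.

Lemma bump_range s : 0 <= bump s <= 3 / 2.
Proof.
unfold bump. pose proof (clamp01_range s).
pose proof (pow2_ge_0 (1 - 2 * clamp01 s)). split; nra.
Qed.

Lemma is_derive_smoothstep s : is_derive smoothstep s (bump s).
Proof.
apply (is_derive_RInt (V := R_NormedModule) bump smoothstep 0 s).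
- apply filter_forall. intros x.
  apply (RInt_correct (V := R_CompleteNormedModule)), ex_RInt_continuous.
  intros; apply bump_continuous.
- apply bump_continuous.
Qed.

Lemma RInt_bump_primitive (F : R -> R) (u v : R) :
  (forall x, Rmin u v <= x <= Rmax u v -> is_derive F x (bump x)) ->
  RInt bump u v = F v - F u.
Proof.
intros HF. apply (is_RInt_unique (V := R_CompleteNormedModule)).
apply (is_RInt_derive (V := R_CompleteNormedModule)); auto.
intros; apply bump_continuous.
Qed.

Lemma smoothstep_le0 s : s <= 0 -> smoothstep s = 0.
Proof.
intros Hs. unfold smoothstep. rewrite (RInt_bump_primitive (fun _ => 0)); [ring |].
intros x Hx. rewrite Rmin_right, Rmax_left in Hx by lra.
unfold bump. rewrite clamp01_le0 by lra. rewrite Rmult_0_r, Rmult_0_l.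
auto_derive; auto.
Qed.

Lemma smoothstep_id s : 0 <= s <= 1 -> smoothstep s = 3 * s ^ 2 - 2 * s ^ 3.
Proof.
intros Hs. unfold smoothstep.
rewrite (RInt_bump_primitive (fun x => 3 * x ^ 2 - 2 * x ^ 3)); [ring |].
intros x Hx. rewrite Rmin_left, Rmax_right in Hx by lra.
unfold bump. rewrite clamp01_id by lra.
auto_derive; [auto | ring].
Qed.

Lemma smoothstep_ge1 s : 1 <= s -> smoothstep s = 1.
Proof.
intros Hs. unfold smoothstep.
assert (Hex : forall u v, ex_RInt bump u v).
{ intros; apply (ex_RInt_continuous (V := R_CompleteNormedModule)).
  intros; apply bump_continuous. }
rewrite <- (RInt_Chasles (V := R_CompleteNormedModule) bump 0 1 s) by apply Hex.
fold (smoothstep 1). rewrite smoothstep_id by lra.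
rewrite (RInt_bump_primitive (fun _ => 0)).
- change (3 * 1 ^ 2 - 2 * 1 ^ 3 + (0 - 0) = 1). ring.
- intros x Hx. rewrite Rmin_left, Rmax_right in Hx by lra.
  unfold bump. rewrite clamp01_ge1 by lra. rewrite Rminus_diag, Rmult_0_r.
  auto_derive; auto.
Qed.

Lemma smoothstep_range s : 0 <= smoothstep s <= 1.
Proof.
destruct (Rle_lt_dec s 0) as [Hs0 | Hs0]; [rewrite smoothstep_le0 by lra; lra |].
destruct (Rle_lt_dec 1 s) as [Hs1 | Hs1]; [rewrite smoothstep_ge1 by lra; lra |].
rewrite smoothstep_id by lra.
assert (0 <= (1 - s) ^ 2 * (1 + 2 * s)) by (apply Rmult_le_pos; nra).
split; nra.
Qed.

Section Profile.

Variables a b t1 C : R.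
Hypothesis HC : 0 < C.

Definition profile (t : R) : R := a + (b - a) * smoothstep ((t - t1) / C).

Definition profile_deriv (t : R) : R := (b - a) * bump ((t - t1) / C) / C.

Lemma is_derive_profile t : is_derive profile t (profile_deriv t).
Proof.
unfold profile, profile_deriv.
assert (Hs : is_derive (fun t => smoothstep ((t - t1) / C)) t
               (/ C * bump ((t - t1) / C))).
{ apply (is_derive_comp smoothstep (fun t => (t - t1) / C)).
  - apply is_derive_smoothstep.
  - auto_derive; [auto | field; lra]. }
pose proof (is_derive_plus _ _ _ _ _ (is_derive_const a t) (is_derive_scal _ _ (b - a) _ Hs))
  as Hsum.
replace ((b - a) * bump ((t - t1) / C) / C)
  with (plus zero (scal (b - a) (/ C * bump ((t - t1) / C)))); [exact Hsum |].
change (0 + (b - a) * (/ C * bump ((t - t1) / C)) = (b - a) * bump ((t - t1) / C) / C).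
field; lra.
Qed.

Lemma profile_deriv_continuous t : continuous profile_deriv t.
Proof.
apply (continuous_ext (fun t => (b - a) * bump ((t - t1) / C) * / C)); [reflexivity |].
apply (continuous_mult (fun t => (b - a) * bump ((t - t1) / C)) (fun _ => / C));
  [| apply continuous_const].
apply (continuous_mult (fun _ => b - a)); [apply continuous_const |].
apply (continuous_comp (fun t => (t - t1) / C) bump); [| apply bump_continuous].
apply (ex_derive_continuous (V := R_NormedModule)). auto_derive; auto.
Qed.

Lemma profile_before t : t <= t1 -> profile t = a.
Proof.
intros Ht. unfold profile. rewrite smoothstep_le0; [ring |].
apply Rmult_le_reg_r with C; [lra |]. unfold Rdiv. rewrite Rmult_assoc, Rinv_l; lra.
Qed.

Lemma profile_after t : t1 + C <= t -> profile t = b.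
Proof.
intros Ht. unfold profile. rewrite smoothstep_ge1; [ring |].
apply Rmult_le_reg_r with C; [lra |]. unfold Rdiv. rewrite Rmult_assoc, Rinv_l; lra.
Qed.

Lemma profile_between (lo hi t : R) :
  lo <= a <= hi -> lo <= b <= hi -> lo <= profile t <= hi.
Proof.
intros Ha Hb. unfold profile.
destruct (smoothstep_range ((t - t1) / C)) as [g0 g1].
set (g := smoothstep ((t - t1) / C)) in *.
replace (a + (b - a) * g) with ((1 - g) * a + g * b) by ring.
split; nra.
Qed.

Lemma Rabs_profile_deriv_le t : Rabs (profile_deriv t) <= 3 / 2 * Rabs (b - a) / C.
Proof.
unfold profile_deriv, Rdiv. rewrite !Rabs_mult.
rewrite (Rabs_pos_eq (/ C)) by (left; apply Rinv_0_lt_compat; lra).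
apply Rmult_le_compat_r; [left; apply Rinv_0_lt_compat; lra |].
destruct (bump_range ((t - t1) * / C)).
rewrite (Rabs_pos_eq (bump _)) by lra.
pose proof (Rabs_pos (b - a)). nra.
Qed.

End Profile.

Lemma cont3_ext (g h : R -> R -> R -> R) :
  (forall x y t, g x y t = h x y t) -> cont3 h -> cont3 g.
Proof.
intros Hgh Hh x y t eps He. destruct (Hh x y t eps He) as [d [Hd Hball]].
exists d. split; [exact Hd |]. intros. rewrite !Hgh. auto.
Qed.

Lemma cont3_time (f : R -> R) :
  (forall t, continuous f t) -> cont3 (fun _ _ t => f t).
Proof.
intros Hf x y t eps He.
destruct (proj1 (filterlim_locally f (f t)) (Hf t) (mkposreal eps He)) as [d Hd].
exists d. split; [apply cond_pos |]. intros x' y' t' _ _ Ht. exact (Hd t' Ht).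
Qed.

Section TimeOnly.

Variables f f' : R -> R.
Hypothesis Hf : forall t, is_derive f t (f' t).
Hypothesis Hf'c : forall t, continuous f' t.

Lemma pdx_time x y t : pdx (fun _ _ s => f s) x y t = 0.
Proof. unfold pdx; apply Derive_const. Qed.

Lemma pdy_time x y t : pdy (fun _ _ s => f s) x y t = 0.
Proof. unfold pdy; apply Derive_const. Qed.

Lemma pdt_time x y t : pdt (fun _ _ s => f s) x y t = f' t.
Proof. unfold pdt; apply is_derive_unique, Hf. Qed.

Lemma C1_3_time : C1_3 (fun _ _ s => f s).
Proof.
assert (Hzero : cont3 (fun _ _ _ => 0)) by (apply cont3_time; intros; apply continuous_const).
split; [| split; [| split]].
- intros x y t. split; [| split]; [apply ex_derive_const | apply ex_derive_const |].
  exists (f' t). apply Hf.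
- apply (cont3_ext _ _ pdx_time Hzero).
- apply (cont3_ext _ _ pdy_time Hzero).
- apply (cont3_ext _ _ pdt_time), cont3_time, Hf'c.
Qed.

End TimeOnly.

Lemma diag_form_bounds (Lam d1 d2 xi1 xi2 : R) :
  / Lam <= d1 <= Lam -> / Lam <= d2 <= Lam ->
  / Lam * (xi1 ^ 2 + xi2 ^ 2) <= xi1 * xi1 * d1 + xi2 * xi2 * d2 <= Lam * (xi1 ^ 2 + xi2 ^ 2).
Proof.
intros H1 H2. pose proof (pow2_ge_0 xi1); pose proof (pow2_ge_0 xi2). split; nra.
Qed.

Lemma reg_class_weaken (Lam Cb Cb' : R) (A : matfield) :
  Cb <= Cb' -> reg_class Lam Cb A -> reg_class Lam Cb' A.
Proof.
intros Hle [Hell [HC1 Hder]]. split; [exact Hell | split; [exact HC1 |]].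
intros i j x y t. destruct (Hder i j x y t) as [Hx [Hy Ht]]. repeat split; lra.
Qed.

Lemma sqrt_PI_ge : 3 / 2 <= sqrt PI.
Proof.
rewrite <- (sqrt_square (3 / 2)) by lra. apply sqrt_le_1_alt.
pose proof PI2_3_2. lra.
Qed.

Definition transition_matrix (a b t1 C : R) : matfield :=
  fun i j _ _ t => diag2 a (profile a b t1 C t) i j.

Section Transition.

Variables a b t1 C : R.
Hypothesis HC : 0 < C.

Lemma transition_entry_deriv i j t :
  is_derive (fun s => diag2 a (profile a b t1 C s) i j) t
            (diag2 0 (profile_deriv a b t1 C t) i j).
Proof.
destruct i, j; simpl; [| | | apply is_derive_profile, HC]; auto_derive; auto.
Qed.

Lemma transition_entry_deriv_continuous i j t :
  continuous (fun s => diag2 0 (profile_deriv a b t1 C s) i j) t.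
Proof.
destruct i, j; simpl; try apply continuous_const.
apply profile_deriv_continuous.
Qed.

Lemma transition_matrix_reg_class (Lam : R) :
  / Lam <= a <= Lam -> / Lam <= b <= Lam ->
  reg_class Lam (3 / 2 * Rabs (b - a) / C) (transition_matrix a b t1 C).
Proof.
intros Ha Hb. split; [| split].
- intros x y t xi1 xi2. unfold qform, transition_matrix; simpl.
  pose proof (profile_between a b t1 C (/ Lam) Lam t Ha Hb).
  replace (xi1 * xi1 * a + xi1 * xi2 * 0 + xi2 * xi1 * 0 + xi2 * xi2 * profile a b t1 C t)
    with (xi1 * xi1 * a + xi2 * xi2 * profile a b t1 C t) by ring.
  apply diag_form_bounds; assumption.
- intros i j.
  exact (C1_3_time _ _ (transition_entry_deriv i j) (transition_entry_deriv_continuous i j)).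
- intros i j x y t. unfold transition_matrix.
  rewrite (pdx_time (fun s => diag2 a (profile a b t1 C s) i j)),
          (pdy_time (fun s => diag2 a (profile a b t1 C s) i j)),
          (pdt_time _ _ (transition_entry_deriv i j)), Rabs_R0.
  assert (Hbound : 0 <= 3 / 2 * Rabs (b - a) / C)
    by (pose proof (Rabs_pos (b - a)); apply Rdiv_le_0_compat; lra).
  split; [exact Hbound | split; [exact Hbound |]].
  destruct i, j; simpl; try (rewrite Rabs_R0; exact Hbound).
  apply Rabs_profile_deriv_le, HC.
Qed.

End Transition.

Section Mode.

Variables K a : R.
Hypothesis Ha : 0 <= a.

Definition mode (x y t : R) : R := cos (K * x) * exp (- (K * sqrt a * t)).

Lemma pdx_mode x y t : pdx mode x y t = - K * sin (K * x) * exp (- (K * sqrt a * t)).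
Proof. unfold pdx, mode. apply is_derive_unique. auto_derive; [auto | ring]. Qed.

Lemma pdy_mode x y t : pdy mode x y t = 0.
Proof. unfold pdy, mode. apply Derive_const. Qed.

Lemma pdt_mode x y t : pdt mode x y t = - (K * sqrt a) * cos (K * x) * exp (- (K * sqrt a * t)).
Proof. unfold pdt, mode. apply is_derive_unique. auto_derive; [auto | ring]. Qed.

(* Only the first column of [A] is seen, since [mode] does not depend on [y]. *)
Lemma mode_solves (A : matfield) :
  (forall x y t, A ix_x ix_x x y t = a) -> (forall x y t, A ix_y ix_x x y t = 0) ->
  solves_eq A mode.
Proof.
intros Hxx Hyx x y t.
assert (Ft : forall s, pdt mode x y s
                       = - (K * sqrt a) * cos (K * x) * exp (- (K * sqrt a * s)))
  by (intros; apply pdt_mode).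
assert (Fx : forall s, flux A mode ix_x s y t
                       = a * (- K * sin (K * s) * exp (- (K * sqrt a * t)))).
{ intros. unfold flux. rewrite Hxx, pdx_mode, pdy_mode. ring. }
assert (Fy : forall s, flux A mode ix_y x s t = 0).
{ intros. unfold flux. rewrite Hyx, pdy_mode. ring. }
rewrite (Derive_ext _ _ _ Ft), (Derive_ext _ _ _ Fx), (Derive_ext _ _ _ Fy), Derive_const.
split; [| split; [| split; [| split]]].
- intros; unfold mode; repeat split; auto_derive; auto.
- eapply ex_derive_ext; [intros; symmetry; apply Ft | auto_derive; auto].
- eapply ex_derive_ext; [intros; symmetry; apply Fx | auto_derive; auto].
- eapply ex_derive_ext; [intros; symmetry; apply Fy | apply ex_derive_const].
- rewrite (is_derive_unique _ _ (K * K * (sqrt a * sqrt a) * cos (K * x) * exp (- (K * sqrt a * t))))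
    by (auto_derive; [auto | ring]).
  rewrite (is_derive_unique _ _ (- a * (K * K) * cos (K * x) * exp (- (K * sqrt a * t))))
    by (auto_derive; [auto | ring]).
  rewrite sqrt_sqrt by exact Ha. ring.
Qed.

End Mode.

Theorem mainTheorem10 (k : nat) (a b t1 C : R) :
  (1 <= k)%nat ->
  1 / 10 < a < 10 -> 1 / 10 < b < 10 ->
  0 <= t1 -> 0 < C ->
  exists A : matfield,
    torus_periodic A /\
    (forall i j x y t, t <= t1 -> A i j x y t = diag2 a a i j) /\
    (forall i j x y t, t1 + C <= t -> A i j x y t = diag2 a b i j) /\
    reg_class 10 (10 * sqrt PI / C) A /\
    solves_eq A (fun x y t => cos (INR k * x) * exp (- (INR k * sqrt a * t))).
Proof.
intros _ Ha Hb _ HC.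
exists (transition_matrix a b t1 C).
split; [| split; [| split; [| split]]].
- intros i j x y t. split; reflexivity.
- intros i j x y t Ht. unfold transition_matrix. rewrite profile_before by assumption. reflexivity.
- intros i j x y t Ht. unfold transition_matrix. rewrite profile_after by assumption. reflexivity.
- apply (reg_class_weaken _ (3 / 2 * Rabs (b - a) / C)).
  + assert (Rabs (b - a) <= 10) by (apply Rabs_le; lra).
    pose proof sqrt_PI_ge.
    apply Rmult_le_compat_r; [left; apply Rinv_0_lt_compat; lra | nra].
  + assert (Hinv : / 10 = 1 / 10) by field.
    apply transition_matrix_reg_class; [exact HC | rewrite Hinv; lra ..].
- apply (mode_solves (INR k) a); [lra | reflexivity | reflexivity].
Qed.
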